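(* Let $\mathscr T^\otimes=(V,\mathcal E^\otimes)$ be the tensor product of rooted directed trees $\mathscr T_1,\dots,\mathscr T_d$, let $\mathscr T^\otimes_{\mathsf{root}}=(V^\otimes,\mathcal F)$ be the component of $\mathscr T^\otimes$ containing $\mathsf{root}=(\mathsf{root}_1,\dots,\mathsf{root}_d)$, let $\mathscr T$ be the directed Cartesian product of $\mathscr T_1,\dots,\mathscr T_d$, and let $\mathsf{Root}^\otimes=\{\mathfrak v\in V:\mathfrak v_j=\mathsf{root}_j\text{ for at least one }j\}$. Then: (i) if $\mathfrak v\in\mathsf{Root}^\otimes$, there is no $\mathfrak u\in V$ with $(\mathfrak u,\mathfrak v)\in\mathcal E^\otimes$; (ii) for each $\mathfrak v\in V\setminus\mathsf{Root}^\otimes$ there is a unique $\mathfrak u\in V$ with $(\mathfrak u,\mathfrak v)\in\mathcal E^\otimes$; (iii) $\mathscr T^\otimes$ has no circuits; (iv) no two distinct vertices of $\mathsf{Root}^\otimes$ can be connected by a path in $\mathscr T^\otimes$; (v) there is a bijective correspondence between the components of $\mathscr T^\otimes$ and the elements of $\mathsf{Root}^\otimes$; in particular $\mathscr T^\otimes$ has countably many components; (vi) each component is a rooted directed tree whose root lies in $\mathsf{Root}^\otimes$; (vii) $\mathscr T^\otimes$ is locally finite if and only if $\mathscr T$ is locally finite; (viii) $\mathscr T^\otimes$ is leafless; (ix) if each $\mathscr T_j$ has finite branching index $k_{\mathscr T_j}$, then the branching index of $\mathscr T^\otimes_{\mathsf{root}}$ equals $\max\{k_{\mathscr T_j}:1\le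 j\le d\}$; (x) for each $v\in V$ there exists $\mathfrak v\in V^\otimes$ such that $|\alpha_v|=\alpha_{\mathfrak v}$, where $\alpha_v$ is the depth of $v$ in $\mathscr T$ and $\alpha_{\mathfrak v}$ the depth of $\mathfrak v$ in the directed tree $\mathscr T^\otimes_{\mathsf{root}}$.
   Context: Directed graph: $(V,\mathcal E)$, $\mathcal E\subseteq V\times V$ without loops; circuits and paths as usual (a path joins two vertices by a sequence of distinct vertices with consecutive ones joined by an edge in either direction). A directed tree is connected, has no circuits, and every vertex with an incoming edge has exactly one (parent $\mathsf{par}(v)$); rooted: a (unique) vertex $\mathsf{root}$ without incoming edge. $\mathsf{Chi}(u)=\{v:(u,v)\in\mathcal E\}$; locally finite: all $\mathsf{Chi}(u)$ finite; leafless: all $\mathsf{Chi}(u)\ne\emptyset$; all directed trees are assumed leafless. Depth of $u$ in a rooted tree: $n$ with $u\in\mathsf{Chi}^n(\mathsf{root})$. Branching index: $1+\sup\{\text{depth}(w):\mathrm{card}\,\mathsf{Chi}(w)\ge2\}$ if such $w$ exist, else $0$. For rooted trees $\mathscr T_j=(V_j,\mathcal E_j)$ with roots $\mathsf{root}_j$: the tensor product is $\mathscr T^\otimes=(V,\mathcal E^\otimes)$, $V=V_1\times\dots\times V_d$, $(\mathfrak v,\mathfrak w)\in\mathcal E^\otimes$ iff $(\mathfrak v_j,\mathfrak w_j)\in\mathcal E_j$ for all $j$; the directed Cartesian product $\mathscr T=(V,\mathcal E)$ has $(v,w)\in\mathcal E$ iff for some $k$, $(v_k,w_k)\in\mathcal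 E_k$ and $w_j=v_j$ ($j\ne k$), and the depth of $v\in V$ in $\mathscr T$ is $\alpha_v\in\mathbb N^d$ with $j$-th entry the depth of $v_j$ in $\mathscr T_j$, $|\alpha_v|$ its entry sum. A component of $\mathscr T^\otimes$ is an equivalence class for the relation ''$\mathfrak v=\mathfrak w$ or $\mathfrak v,\mathfrak w$ connected by a path in $\mathscr T^\otimes$'', viewed with the induced edges. *)

From mathcomp Require Import all_boot.
From Stdlib Require Import List.
Set Implicit Arguments. Unset Strict Implicit. Unset Printing Implicit Defensive.

Section Graphs.
Variable V : Type.
Variable E : V -> V -> Prop.

Definition connected_by_path (u v : V) : Prop :=
  exists (n : nat) (p : nat -> V),
    p 0 = u /\ p n = v /\
    (forall i j, i <= n -> j <= n -> p i = p j -> i = j) /\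
    (forall i, i < n -> E (p i) (p i.+1) \/ E (p i.+1) (p i)).

Definition has_circuit : Prop :=
  exists (n : nat) (p : nat -> V),
    2 <= n /\
    (forall i j, i < n -> j < n -> p i = p j -> i = j) /\
    (forall i, i.+1 < n -> E (p i) (p i.+1)) /\
    E (p n.-1) (p 0).

Definition no_loops : Prop := forall v, ~ E v v.

Definition graph_connected : Prop :=
  forall u v, u <> v -> connected_by_path u v.

Definition directed_tree : Prop :=
  no_loops /\ graph_connected /\ ~ has_circuit /\
  (forall v u1 u2, E u1 v -> E u2 v -> u1 = u2).

Definition rooted_dtree (r : V) : Prop :=
  directed_tree /\ (forall u, ~ E u r).

Definition leafless : Prop := forall u, exists v, E u v.

Definition locally_finite : Prop :=
  forall u, exists s : list V, forall v, E u v -> In v s.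

(* Chi^n(r) membership: in_Chi_pow r n u  <->  u \in Chi^n(r);
   i.e. n is the depth of u in the tree rooted at r *)
Fixpoint in_Chi_pow (r : V) (n : nat) (u : V) : Prop :=
  match n with
  | 0 => u = r
  | n'.+1 => exists w, in_Chi_pow r n' w /\ E w u
  end.

Definition branching_vertex (w : V) : Prop :=
  exists v1 v2, v1 <> v2 /\ E w v1 /\ E w v2.

(* the branching index of the tree rooted at r is the (finite) number k:
   1 + sup{depth w : card Chi(w) >= 2} if such w exist, 0 otherwise *)
Definition branching_index_is (r : V) (k : nat) : Prop :=
  ((forall w, ~ branching_vertex w) /\ k = 0) \/
  ((exists w n, branching_vertex w /\ in_Chi_pow r n w /\ n.+1 = k) /\
   (forall w n, branching_vertex w -> in_Chi_pow r n w -> n.+1 <= k)).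

Definition comp_of (v : V) : V -> Prop :=
  fun w => v = w \/ connected_by_path v w.

Definition is_component (C : V -> Prop) : Prop :=
  exists v, forall w, C w <-> comp_of v w.

Definition induced (C : V -> Prop) : {x | C x} -> {x | C x} -> Prop :=
  fun x y => E (proj1_sig x) (proj1_sig y).

End Graphs.

Arguments induced {V} E C.

Definition countable_type (T : Type) : Prop :=
  exists f : T -> nat, injective f.

Section Products.
Variable d : nat.
Variable T : 'I_d -> Type.
Variable E : forall j, T j -> T j -> Prop.
Variable r : forall j, T j.

Definition prodV := forall j : 'I_d, T j.

Definition tensor_edge (v w : prodV) : Prop := forall j, E (v j) (w j).

Definition cart_edge (v w : prodV) : Prop :=
  exists k, E (v k) (w k) /\ (forall j, j <> k -> w j = v j).

Definition prod_root : prodV := fun j => r j.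

Definition RootT (v : prodV) : Prop := exists j, v j = r j.

Definition Vroot : prodV -> Prop := comp_of tensor_edge prod_root.

Definition Vroot_root : {x | Vroot x} := exist _ prod_root (or_introl erefl).

Definition Froot := induced tensor_edge Vroot.

Definition components := {C : prodV -> Prop | is_component tensor_edge C}.

End Products.

Arguments prodV {d} T.
Arguments tensor_edge {d T} E v w.
Arguments cart_edge {d T} E v w.
Arguments prod_root {d T} r j.
Arguments RootT {d T} r v.
Arguments Vroot {d T} E r _.
Arguments Vroot_root {d T} E r.
Arguments Froot {d T} E r _ _.
Arguments components {d T} E.

From mathcomp Require Import all_boot zify.
From Stdlib Require Import Classical ClassicalEpsilon.
From Stdlib Require Import FunctionalExtensionality PropExtensionality ProofIrrelevance.
Set Implicit Arguments. Unset Strict Implicit. Unset Printing Implicit Defensive.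

(* Every coordinate tree carries a depth function, and a tensor edge raises the
   depth of every coordinate by exactly one.  Hence there are no circuits, a
   vertex off Root⊗ has exactly one parent (take parents coordinatewise), and
   going up [min_depth v] generations from v lands on a vertex [comp_root v] of
   Root⊗ which is invariant along edges and joined to v by a walk: components
   correspond to the vertices of Root⊗.  The component of the root is the set
   of vertices whose coordinates all have the same depth, so its depths and
   branching vertices are read off coordinatewise. *)

Lemma proj1_sig_inj (A : Type) (P : A -> Prop) : injective (@proj1_sig A P).
Proof. move=> a b; apply: eq_sig_hprop => x p q; exact: proof_irrelevance. Qed.

Section Walks.
Variables (V : Type) (E : V -> V -> Prop).

Definition walk (u v : V) : Prop :=
  exists n (p : nat -> V), p 0 = u /\ p n = v /\
    (forall i, i < n -> E (p i) (p i.+1) \/ E (p i.+1) (p i)).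

Lemma walk_refl u : walk u u.
Proof. by exists 0, (fun _ => u). Qed.

Lemma walk_edge u v : E u v \/ E v u -> walk u v.
Proof.
move=> h; exists 1, (fun i => if i == 0 then u else v); do 2!split => //.
by case=> // _; left.
Qed.

Lemma walk_sym u v : walk u v -> walk v u.
Proof.
case=> n [p [h0 [hn hs]]]; exists n, (fun i => p (n - i)).
rewrite subn0 subnn; split=> //; split=> // i lt_in.
have := hs (n - i.+1) ltac:(lia); have -> : (n - i.+1).+1 = n - i by lia.
by case; [right|left].
Qed.

Lemma walk_trans u v w : walk u v -> walk v w -> walk u w.
Proof.
case=> n [p [h0 [hn hs]]] [m [q [g0 [gm gs]]]].
exists (n + m), (fun i => if i <= n then p i else q (i - n)); split => //=.
split.
  case: ifP => h; last by rewrite addKn.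
  have m0 : m = 0 by lia.
  by rewrite m0 addn0 hn -g0 -m0.
move=> i lt_i; case: (ltngtP i n) => [lt_in|lt_ni|ein]; last subst i.
- exact: hs.
- have -> : i.+1 - n = (i - n).+1 by lia.
  by apply: gs; lia.
- by rewrite subSnn hn -g0; apply: gs; lia.
Qed.

Lemma walk_of_path u v : connected_by_path E u v -> walk u v.
Proof. by case=> n [p [h0 [hn [_ hs]]]]; exists n, p. Qed.

Lemma comp_of_walk u v : walk u v -> comp_of E u v.
Proof.
case=> n; elim/ltn_ind: n => n IH [p [h0 [hn hs]]].
have [inj|not_inj] := classic (forall i j, i <= n -> j <= n -> p i = p j -> i = j).
  by right; exists n, p.
have [i [j [lt_ij [le_jn eq_pij]]]] : exists i j, i < j /\ j <= n /\ p i = p j.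
  apply: NNPP => no_rep; apply: not_inj => i j le_in le_jn e.
  by case: (ltngtP i j) => // lt; case: no_rep; [exists i, j|exists j, i].
(* cut out the loop p i, ..., p j *)
apply: (IH (n - (j - i))); first lia.
exists (fun k => if k <= i then p k else p (k + (j - i))); split => //=.
split.
  case: ifP => h; last by rewrite subnK; [|lia].
  have -> : n - (j - i) = i by lia.
  by rewrite eq_pij (_ : j = n) //; lia.
move=> k lt_k; case: (ltngtP k i) => [lt_ki|lt_ik|eki]; last subst k.
- by apply: hs; lia.
- by rewrite addSn; apply: hs; lia.
- by rewrite eq_pij addSn subnKC ?(ltnW lt_ij) //; apply: hs; lia.
Qed.

Lemma comp_ofE u v : comp_of E u v <-> walk u v.
Proof.
split; last exact: comp_of_walk.
by case=> [->|/walk_of_path //]; exact: walk_refl.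
Qed.

Lemma induced_path (C : V -> Prop) (x y : {z | C z}) n (p : nat -> V) :
  p 0 = proj1_sig x -> p n = proj1_sig y ->
  (forall i j, i <= n -> j <= n -> p i = p j -> i = j) ->
  (forall i, i < n -> E (p i) (p i.+1) \/ E (p i.+1) (p i)) ->
  (forall i, i <= n -> C (p i)) ->
  connected_by_path (induced E C) x y.
Proof.
move=> h0 hn inj hs hC.
pose q i : {z | C z} :=
  if excluded_middle_informative (C (p i)) is left h then exist _ (p i) h else x.
have qE i : i <= n -> proj1_sig (q i) = p i.
  by rewrite /q => le_in; case: excluded_middle_informative => // /(_ (hC i le_in)).
exists n, q; split; first by apply: proj1_sig_inj; rewrite qE.
split; first by apply: proj1_sig_inj; rewrite qE.
split; first by move=> i j le_in le_jn e; apply: inj; rewrite // -qE // e qE.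
by move=> i lt_in; rewrite /induced !qE //; [exact: hs|lia].
Qed.

Lemma induced_circuit (C : V -> Prop) : has_circuit (induced E C) -> has_circuit E.
Proof.
case=> n [p [n_ge2 [inj [hs hl]]]]; exists n, (fun i => proj1_sig (p i)).
split=> //; split=> // i j lt_in lt_jn /proj1_sig_inj; exact: inj.
Qed.

End Walks.

Section RootedTree.
Variables (V : Type) (E : V -> V -> Prop) (r : V).
Hypothesis tree : rooted_dtree E r.

Let parent_uniq : forall v u1 u2, E u1 v -> E u2 v -> u1 = u2.
Proof. by case: tree => [[_ [_ [_ h]]] _]. Qed.

Let root_no_parent : forall u, ~ E u r.
Proof. by case: tree. Qed.

Lemma path_from_root_forward n (p : nat -> V) : p 0 = r ->
  (forall i j, i <= n -> j <= n -> p i = p j -> i = j) ->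
  (forall i, i < n -> E (p i) (p i.+1) \/ E (p i.+1) (p i)) ->
  forall i, i < n -> E (p i) (p i.+1).
Proof.
(* a backward step would make p i.+2 a second parent of p i.+1 *)
move=> h0 inj hs; elim=> [|i IH] lt_in.
  by case: (hs 0 lt_in) => // h; case: (root_no_parent (u := p 1)); rewrite -h0.
case: (hs i.+1 lt_in) => // h.
have := inj _ _ lt_in (ltnW (ltnW lt_in)) (parent_uniq h (IH (ltnW lt_in))); lia.
Qed.

Lemma in_Chi_pow_exists x : exists n, in_Chi_pow E r n x.
Proof.
have [->|ne] := classic (x = r); first by exists 0.
have [_ [connected _]] := tree.1.
case: (connected _ _ (nesym ne)) => n [p [h0 [hn [inj hs]]]].
have fwd := path_from_root_forward h0 inj hs.
exists n; rewrite -hn; elim: {-2}n (leqnn n) => [|i IH] le_in /=; first by rewrite h0.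
by exists (p i); split; [exact: IH (ltnW le_in)|exact: fwd].
Qed.

Lemma in_Chi_pow_uniq n m x : in_Chi_pow E r n x -> in_Chi_pow E r m x -> n = m.
Proof.
elim: n m x => [|n IH] [|m] x //=.
- by move=> -> [w [_ /root_no_parent]].
- by move=> [w [_ h]] e; subst x; case: (root_no_parent h).
- move=> [w [hw h]] [w' [hw' h']]; have e := parent_uniq h h'; subst w'.
  by rewrite (IH m w).
Qed.

Definition depth (x : V) : nat := epsilon (inhabits 0) (fun n => in_Chi_pow E r n x).

Lemma depthP x : in_Chi_pow E r (depth x) x.
Proof. exact: (epsilon_spec _ _ (in_Chi_pow_exists x)). Qed.

Lemma depth_eq n x : in_Chi_pow E r n x -> depth x = n.
Proof. exact: in_Chi_pow_uniq (depthP x). Qed.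

Lemma depth_edge u x : E u x -> depth x = (depth u).+1.
Proof. by move=> h; apply: depth_eq; exists u; split => //; exact: depthP. Qed.

Lemma depth_root : depth r = 0.
Proof. exact: depth_eq. Qed.

Lemma depth0 x : depth x = 0 -> x = r.
Proof. by move=> h; have := depthP x; rewrite h. Qed.

(* [parent r] is unspecified *)
Definition parent (x : V) : V := epsilon (inhabits r) (fun u => E u x).

Lemma edge_parent x : x <> r -> E (parent x) x.
Proof.
move=> ne; apply: (epsilon_spec (inhabits r) (fun u => E u x)).
by have := depthP x; case: (depth x) => [/ne|n /= [w [_ h]]] //; exists w.
Qed.

Lemma parent_edge u x : E u x -> parent x = u.
Proof.
move=> h; have ne : x <> r by move=> e; subst x; exact: root_no_parent h.
exact: parent_uniq (edge_parent ne) h.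
Qed.

Lemma depth_parent x : x <> r -> depth x = (depth (parent x)).+1.
Proof. by move/edge_parent/depth_edge. Qed.

Lemma depth_iter_parent k x : k <= depth x -> depth (iter k parent x) = depth x - k.
Proof.
elim: k => [|k IH] le_k /=; first by rewrite subn0.
have dk := IH (ltnW le_k).
have ne : iter k parent x <> r by move=> e; move: dk; rewrite e depth_root; lia.
by move: dk; rewrite (depth_parent ne); lia.
Qed.

Lemma exists_depth : leafless E -> forall n, exists x, depth x = n.
Proof.
move=> leaf; elim=> [|n [x dx]]; first by exists r; exact: depth_root.
by case: (leaf x) => y hy; exists y; rewrite (depth_edge hy) dx.
Qed.

End RootedTree.

Lemma finite_dprod d (T : 'I_d -> Type) (w0 : forall j, T j) (L : forall j, list (T j)) :
  exists s : list (forall j, T j),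
    forall w, (forall j, List.In (w j) (L j)) -> List.In w s.
Proof.
suff /(_ d) [s hs] : forall n, exists s : list (forall j, T j), forall w,
    (forall j : 'I_d, n <= j -> w j = w0 j) ->
    (forall j : 'I_d, j < n -> List.In (w j) (L j)) -> List.In w s.
  by exists s => w hL; apply: hs => // j; have := ltn_ord j; lia.
elim=> [|n [s hs]].
  exists (w0 :: nil) => w w0E _; left.
  by apply: functional_extensionality_dep => j; rewrite w0E.
case: (ltnP n d) => [lt_nd|le_dn]; last first.
  exists s => w w0E hL; apply: hs => j hj; last by apply: hL; lia.
  by have := ltn_ord j; lia.
pose jn := Ordinal lt_nd.
exists (List.flat_map (fun w => List.map (fun y => dfwith w y) (L jn)) s).
move=> w w0E hL; pose w' := dfwith w (w0 jn).
apply/List.in_flat_map; exists w'; split.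
  apply: hs => j hj; case: (eqVneq jn j) => [ejn|ne]; try subst j.
  - by rewrite /w' dfwith_in.
  - by rewrite /w' dfwith_out //; apply: w0E; have : n != j := ne; lia.
  - by rewrite /= ltnn in hj.
  - by rewrite /w' dfwith_out //; apply: hL; lia.
have -> : w = dfwith w' (w jn).
  apply: functional_extensionality_dep => j.
  by case: dfwithP => // j' ne; rewrite /w' dfwith_out.
by apply: List.in_map; apply: hL.
Qed.

Section TensorProduct.
Local Unset Implicit Arguments.
Variables (d : nat) (T : 'I_d -> Type).
Variables (E : forall j, T j -> T j -> Prop) (r : forall j, T j).
Hypothesis d_gt0 : 0 < d.
Hypothesis tree : forall j, rooted_dtree (E j) (r j).
Hypothesis leaf : forall j, leafless (E j).
Local Set Implicit Arguments.

Local Notation TE := (tensor_edge E).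
Local Notation depthj j := (depth (E j) (r j)).
Local Notation parentj j := (parent (E j) (r j)).

Definition tparent (v : prodV T) : prodV T := fun j => parentj j (v j).

Lemma depth_tensor_edge u w j : TE u w -> depthj j (w j) = (depthj j (u j)).+1.
Proof. by move=> h; exact: (depth_edge (tree j) (h j)). Qed.

Lemma tensor_parent_uniq u1 u2 v : TE u1 v -> TE u2 v -> u1 = u2.
Proof.
move=> h1 h2; apply: functional_extensionality_dep => j.
by rewrite -(parent_edge (tree j) (h1 j)) -(parent_edge (tree j) (h2 j)).
Qed.

Lemma RootT_no_tensor_parent v : RootT r v -> ~ exists u, TE u v.
Proof. by case=> j vj [u /(_ j)]; rewrite vj; case: (tree j) => _ /(_ (u j)). Qed.

Lemma tensor_parent_unique v : ~ RootT r v -> exists! u, TE u v.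
Proof.
move=> notR; have hp : TE (tparent v) v.
  by move=> j; apply: (edge_parent (tree j)) => e; apply: notR; exists j.
by exists (tparent v); split => // u hu; exact: tensor_parent_uniq hp hu.
Qed.

Lemma tensor_no_circuit : ~ has_circuit TE.
Proof.
pose j0 := Ordinal d_gt0.
case=> n [p [n_ge2 [_ [hs hl]]]].
have dp k : k < n -> depthj j0 (p k j0) = depthj j0 (p 0 j0) + k.
  elim: k => [|k IH] lt_kn; first by rewrite addn0.
  by rewrite (depth_tensor_edge j0 (hs k lt_kn)) IH ?addnS // ltnW.
by have := depth_tensor_edge j0 hl; rewrite (dp n.-1); lia.
Qed.

Lemma tensor_no_loops : no_loops TE.
Proof. by move=> v /(depth_tensor_edge (Ordinal d_gt0)); lia. Qed.

Lemma tensor_leafless : leafless TE.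
Proof.
move=> u; exists (fun j => epsilon (inhabits (r j)) (E j (u j))) => j.
exact: epsilon_spec (leaf j (u j)).
Qed.

Definition shallowest (v : prodV T) : 'I_d :=
  [arg min_(j < Ordinal d_gt0) depthj j (v j)].

Definition min_depth (v : prodV T) : nat := depthj _ (v (shallowest v)).

Lemma min_depth_le v j : min_depth v <= depthj j (v j).
Proof. by rewrite /min_depth /shallowest; case: arg_minnP => // i _; apply. Qed.

Lemma min_depth_edge u w : TE u w -> min_depth w = (min_depth u).+1.
Proof.
move=> h; have := min_depth_le u (shallowest w); have := min_depth_le w (shallowest u).
rewrite /min_depth !(depth_tensor_edge _ h); lia.
Qed.

(* the vertex of Root⊗ at the top of the component of v *)
Definition comp_root (v : prodV T) : prodV T := iter (min_depth v) tparent v.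

Lemma iter_tparent k v j : iter k tparent v j = iter k (parentj j) (v j).
Proof. by elim: k => //= k IH; rewrite /tparent IH. Qed.

Lemma comp_root_depth v j : depthj j (comp_root v j) = depthj j (v j) - min_depth v.
Proof. by rewrite /comp_root iter_tparent depth_iter_parent // min_depth_le. Qed.

Lemma RootT_comp_root v : RootT r (comp_root v).
Proof.
by exists (shallowest v); apply: (depth0 (tree _)); rewrite comp_root_depth subnn.
Qed.

Lemma comp_root_id v : RootT r v -> comp_root v = v.
Proof.
case=> j vj; have := min_depth_le v j.
by rewrite /comp_root vj depth_root // leqn0 => /eqP ->.
Qed.

Lemma comp_root_idem v : comp_root (comp_root v) = comp_root v.
Proof. exact: comp_root_id (RootT_comp_root v). Qed.

Lemma walk_iter_tparent k v : k <= min_depth v -> walk TE (iter k tparent v) v.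
Proof.
elim: k => [|k IH] le_k; first exact: walk_refl.
apply: walk_trans (IH (ltnW le_k)); apply: walk_edge; left => j /=.
apply: (edge_parent (tree j)) => e.
have := depth_iter_parent (tree j) (leq_trans (ltnW le_k) (min_depth_le v j)).
by rewrite -(iter_tparent k v j) e (depth_root (tree j)); have := min_depth_le v j; lia.
Qed.

Lemma comp_root_edge u w : TE u w -> comp_root w = comp_root u.
Proof.
move=> h; rewrite /comp_root (min_depth_edge h) iterSr.
congr iter; apply: functional_extensionality_dep => j.
exact: (parent_edge (tree j) (h j)).
Qed.

Lemma comp_root_along n (p : nat -> prodV T) :
  (forall i, i < n -> TE (p i) (p i.+1) \/ TE (p i.+1) (p i)) ->
  forall i, i <= n -> comp_root (p i) = comp_root (p 0).
Proof.
move=> hs; elim=> // i IH lt_in; rewrite -IH ?(ltnW lt_in) //.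
by case: (hs i lt_in) => /comp_root_edge ->.
Qed.

Lemma comp_root_walk u w : walk TE u w -> comp_root u = comp_root w.
Proof. by case=> n [p [<- [<- hs]]]; rewrite (comp_root_along hs). Qed.

Lemma comp_of_comp_root u w : comp_of TE u w <-> comp_root u = comp_root w.
Proof.
rewrite comp_ofE; split; first exact: comp_root_walk.
move=> e; apply: walk_trans (walk_sym (walk_iter_tparent (leqnn (min_depth u)))) _.
by rewrite -/(comp_root u) e; exact: walk_iter_tparent.
Qed.

Lemma RootT_not_connected v w : RootT r v -> RootT r w -> v <> w ->
  ~ connected_by_path TE v w.
Proof.
move=> Rv Rw ne h; apply: ne.
by rewrite -(comp_root_id Rv) -(comp_root_id Rw); exact: comp_root_walk (walk_of_path h).
Qed.

Definition comp_elt (C : components E) : prodV T :=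
  epsilon (inhabits (prod_root r)) (proj1_sig C).

Lemma comp_eltP C : proj1_sig C (comp_elt C).
Proof.
apply: (epsilon_spec _ (proj1_sig C)).
by case: C => C [v Cv] /=; exists v; apply/Cv; left.
Qed.

Lemma componentE (C : components E) y :
  proj1_sig C y <-> comp_root y = comp_root (comp_elt C).
Proof.
have := comp_eltP C; case: C => C [v Cv] /= /Cv /comp_of_comp_root <-.
by rewrite Cv comp_of_comp_root; split => ->.
Qed.

Definition component_root (C : components E) : {v | RootT r v} :=
  exist _ (comp_root (comp_elt C)) (RootT_comp_root _).

Definition component_of (v : prodV T) : components E :=
  exist _ (comp_of TE v) (ex_intro _ v (fun w => iff_refl _)).

Lemma component_root_bij : bijective component_root.
Proof.
exists (fun x => component_of (proj1_sig x)) => [C|[v Rv]]; apply: proj1_sig_inj => /=.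
  apply: functional_extensionality => y; apply: propositional_extensionality.
  rewrite comp_of_comp_root componentE comp_root_idem.
  by split => ->.
have := comp_eltP (component_of v); rewrite /= comp_of_comp_root => <-.
exact: comp_root_id.
Qed.

Lemma components_countable : (forall j, countable_type (T j)) ->
  exists g : components E -> nat, injective g.
Proof.
move=> cnt; pose code j := proj1_sig (constructive_indefinite_description _ (cnt j)).
have code_inj j : injective (code j).
  exact: proj2_sig (constructive_indefinite_description _ (cnt j)).
exists (fun C => pickle [seq code j (proj1_sig (component_root C) j) | j <- enum 'I_d]).
move=> C C' /(pcan_inj pickleK_inv) /eq_in_map e.
apply: (bij_inj component_root_bij); apply: proj1_sig_inj.
by apply: functional_extensionality_dep => j; apply: code_inj; apply: e; rewrite mem_enum.
Qed.

Lemma component_rooted_dtree (C : components E) : exists rt : {x | proj1_sig C x},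
  RootT r (proj1_sig rt) /\ rooted_dtree (induced TE (proj1_sig C)) rt.
Proof.
have Crt : proj1_sig C (comp_root (comp_elt C)) by apply/componentE; rewrite comp_root_idem.
exists (exist _ _ Crt); split; first exact: RootT_comp_root.
split; last first.
  move=> u h; apply: (RootT_no_tensor_parent (RootT_comp_root (comp_elt C))).
  by exists (proj1_sig u).
split; first by move=> x; exact: tensor_no_loops.
split.
  move=> [x Cx] [y Cy] ne.
  have /comp_of_comp_root : comp_root x = comp_root y.
    by rewrite (proj1 (componentE _ _) Cx) (proj1 (componentE _ _) Cy).
  case=> [exy|[n [p [h0 [hn [inj hs]]]]]].
    by subst y; case: ne; exact: proj1_sig_inj.
  apply: (@induced_path _ _ _ (exist _ x Cx) (exist _ y Cy) n p h0 hn inj hs).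
  by move=> i le_in; apply/componentE; rewrite (comp_root_along hs le_in) h0; apply/componentE.
split; first by move/induced_circuit; exact: tensor_no_circuit.
by move=> v u1 u2 h1 h2; apply: proj1_sig_inj; exact: tensor_parent_uniq h1 h2.
Qed.

Lemma tensor_edge_dfwith u w k (y : T k) : TE u w -> E k (u k) y -> TE u (dfwith w y).
Proof.
move=> huw hy j; case: (eqVneq k j) => [<-|ne]; first by rewrite dfwith_in.
by rewrite dfwith_out //; exact: huw.
Qed.

Definition level n (x : prodV T) : Prop := forall j, depthj j (x j) = n.

Lemma level_tensor_edge n u w : level n u -> TE u w -> level n.+1 w.
Proof. by move=> lu h j; rewrite (depth_tensor_edge j h) lu. Qed.

Lemma level_exists n : exists x, level n x.
Proof.
exists (fun j => epsilon (inhabits (r j)) (fun y => depthj j y = n)) => j.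
exact: (epsilon_spec _ _ (exists_depth (tree j) (leaf j) n)).
Qed.

Lemma VrootE x : Vroot E r x <-> exists n, level n x.
Proof.
have Rroot : RootT r (prod_root r) by exists (Ordinal d_gt0).
rewrite /Vroot comp_of_comp_root (comp_root_id Rroot); split.
  move=> e; exists (min_depth x) => j.
  have := comp_root_depth x j; rewrite -e (depth_root (tree j)).
  by have := min_depth_le x j; lia.
case=> n lx; apply: functional_extensionality_dep => j; symmetry.
by apply: (depth0 (tree j)); rewrite comp_root_depth /min_depth !lx subnn.
Qed.

Lemma Vroot_level n x : level n x -> Vroot E r x.
Proof. by move=> lx; apply/VrootE; exists n. Qed.

Lemma Froot_depthE n (w : {x | Vroot E r x}) :
  in_Chi_pow (Froot E r) (Vroot_root E r) n w <-> level n (proj1_sig w).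
Proof.
elim: n w => [|n IH] w /=.
  split => [-> j|lw]; first exact: depth_root.
  apply: proj1_sig_inj; apply: functional_extensionality_dep => j.
  exact: (depth0 (tree j)).
split=> [[u [/IH lu h]]|lw]; first exact: level_tensor_edge lu h.
have ne j : proj1_sig w j <> r j.
  by move=> e; have := lw j; rewrite e (depth_root (tree j)).
have lp : level n (tparent (proj1_sig w)).
  by move=> j; have := lw j; rewrite /tparent (depth_parent (tree j) (ne j)); lia.
exists (exist _ _ (Vroot_level lp)); split; first exact/IH.
by move=> j; exact: (edge_parent (tree j) (ne j)).
Qed.

Lemma Froot_depth_exists n : exists w, in_Chi_pow (Froot E r) (Vroot_root E r) n w.
Proof.
have [x lx] := level_exists n.
by exists (exist _ x (Vroot_level lx)); apply/Froot_depthE.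
Qed.

Lemma Froot_branching_coord (w : {x | Vroot E r x}) :
  branching_vertex (Froot E r) w -> exists j, branching_vertex (E j) (proj1_sig w j).
Proof.
case=> v1 [v2 [ne [h1 h2]]]; apply: NNPP => no_branch; apply: ne.
apply: proj1_sig_inj; apply: functional_extensionality_dep => j.
apply: NNPP => nej; apply: no_branch; exists j, (proj1_sig v1 j), (proj1_sig v2 j).
by split; last split; [|exact: h1|exact: h2].
Qed.

Lemma coord_branching_Froot j (x : T j) : branching_vertex (E j) x ->
  exists w : {x | Vroot E r x},
    branching_vertex (Froot E r) w /\ level (depthj j x) (proj1_sig w).
Proof.
case=> y1 [y2 [ne [h1 h2]]].
have [c lc] := level_exists (depthj j x).
pose u := dfwith c x.
have lu : level (depthj j x) u.
  by move=> i; rewrite /u; case: dfwithP => // i' _; exact: lc.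
have [w hw] := tensor_leafless u.
have hw1 : TE u (dfwith w y1) by apply: tensor_edge_dfwith; rewrite // /u dfwith_in.
have hw2 : TE u (dfwith w y2) by apply: tensor_edge_dfwith; rewrite // /u dfwith_in.
exists (exist _ u (Vroot_level lu)); split => //.
exists (exist _ _ (Vroot_level (level_tensor_edge lu hw1))).
exists (exist _ _ (Vroot_level (level_tensor_edge lu hw2))).
split => // /(f_equal (fun v => proj1_sig v j)) /=.
by rewrite !dfwith_in.
Qed.

Lemma Froot_branching_index (k : 'I_d -> nat) :
  (forall j, branching_index_is (E j) (r j) (k j)) ->
  branching_index_is (Froot E r) (Vroot_root E r) (\max_(j < d) k j).
Proof.
move=> hk.
have bound w n : branching_vertex (Froot E r) w ->
    in_Chi_pow (Froot E r) (Vroot_root E r) n w -> n.+1 <= \max_(j < d) k j.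
  move=> /Froot_branching_coord [j bj] /Froot_depthE lw.
  case: (hk j) => [[no_branch _]|[_ ub]]; first by case: (no_branch _ bj).
  apply: leq_trans (leq_bigmax j); apply: ub bj _.
  by rewrite -(lw j); exact: (depthP (tree j)).
have [i0 max_k] : {i0 | \max_(j < d) k j = k i0} by apply: eq_bigmax; rewrite card_ord.
rewrite max_k in bound *; case: (hk i0) => [[_ k0]|[[x [n [bx [hx kn]]]] _]].
  left; split => // w bw; have [n /Froot_depthE lw] := proj1 (VrootE _) (proj2_sig w).
  by have := bound w n bw lw; rewrite k0.
right; split; last exact: bound.
have [w [bw lw]] := coord_branching_Froot bx.
exists w, n; split => //; split => //.
by apply/Froot_depthE; rewrite -(depth_eq (tree i0) hx).
Qed.

Lemma locally_finite_coord (R : prodV T -> prodV T -> Prop) k (lift : T k -> prodV T) :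
  (forall x y, E k x y -> exists w, R (lift x) w /\ w k = y) ->
  locally_finite R -> locally_finite (E k).
Proof.
move=> hlift lfR x; have [s hs] := lfR (lift x).
exists (List.map (fun w => w k) s) => y /hlift [w [hw <-]].
exact: List.in_map (hs w hw).
Qed.

Lemma children_lists (u : prodV T) : (forall j, locally_finite (E j)) ->
  exists L : forall j, list (T j), forall j y, E j (u j) y -> List.In y (L j).
Proof.
move=> lf; pose hL j := constructive_indefinite_description _ (lf j (u j)).
by exists (fun j => proj1_sig (hL j)) => j; exact: proj2_sig (hL j).
Qed.

Lemma tensor_locally_finiteE : locally_finite TE <-> forall k, locally_finite (E k).
Proof.
split=> [lf k|lf u].
  apply: (locally_finite_coord (lift := fun x : T k => dfwith (prod_root r) x) _ lf).
  move=> x y hxy.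
  have [w hw] := tensor_leafless (dfwith (prod_root r) x).
  exists (dfwith w y); split; last exact: dfwith_in.
  by apply: tensor_edge_dfwith; rewrite // dfwith_in.
have [L hL] := children_lists u lf; have [s hs] := finite_dprod u L.
by exists s => w hw; apply: hs => j; exact: hL (hw j).
Qed.

Lemma cart_locally_finiteE :
  locally_finite (cart_edge E) <-> forall k, locally_finite (E k).
Proof.
split=> [lf k|lf u].
  apply: (locally_finite_coord (lift := fun x : T k => dfwith (prod_root r) x) _ lf).
  move=> x y hxy.
  exists (dfwith (dfwith (prod_root r) x) y); split; last exact: dfwith_in.
  exists k; rewrite !dfwith_in; split => // j ne.
  by rewrite dfwith_out //; apply/eqP => e; apply: ne.
have [L hL] := children_lists u lf.
have [s hs] := finite_dprod u (fun j => u j :: L j).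
exists s => w [k [hk wE]]; apply: hs => j.
by case: (eqVneq j k) => [->|/eqP ne]; [right; exact: hL | left; rewrite wE].
Qed.

End TensorProduct.

Theorem mainTheorem10 (d : nat) (T : 'I_d -> Type)
  (E : forall j, T j -> T j -> Prop) (r : forall j, T j)
  (hd : 0 < d)
  (htree : forall j, rooted_dtree (E j) (r j))
  (hleaf : forall j, leafless (E j))
  (hcount : forall j, countable_type (T j)) :
  (* (i) *)
  (forall v : prodV T, RootT r v -> ~ exists u, tensor_edge E u v) /\
  (* (ii) *)
  (forall v : prodV T, ~ RootT r v -> exists! u, tensor_edge E u v) /\
  (* (iii) *)
  ~ has_circuit (tensor_edge E) /\
  (* (iv) *)
  (forall v w : prodV T, RootT r v -> RootT r w -> v <> w ->
     ~ connected_by_path (tensor_edge E) v w) /\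
  (* (v) *)
  (exists f : components E -> {v : prodV T | RootT r v}, bijective f) /\
  (exists g : components E -> nat, injective g) /\
  (* (vi) *)
  (forall C : components E, exists rt : {x | proj1_sig C x},
     RootT r (proj1_sig rt) /\
     rooted_dtree (induced (tensor_edge E) (proj1_sig C)) rt) /\
  (* (vii) *)
  (locally_finite (tensor_edge E) <-> locally_finite (cart_edge E)) /\
  (* (viii) *)
  leafless (tensor_edge E) /\
  (* (ix) *)
  (forall k : 'I_d -> nat, (forall j, branching_index_is (E j) (r j) (k j)) ->
     branching_index_is (Froot E r) (Vroot_root E r) (\max_(j < d) k j)) /\
  (* (x) *)
  (forall (v : prodV T) (alpha : 'I_d -> nat),
     (forall j, in_Chi_pow (E j) (r j) (alpha j) (v j)) ->
     exists w : {x | Vroot E r x},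
       in_Chi_pow (Froot E r) (Vroot_root E r) (\sum_(j < d) alpha j) w).
Proof.
split; first exact: RootT_no_tensor_parent htree.
split; first exact: tensor_parent_unique htree.
split; first exact: tensor_no_circuit hd htree.
split; first exact: RootT_not_connected hd htree.
split; first by exists (component_root hd htree); exact: component_root_bij.
split; first exact: components_countable hd htree hcount.
split; first exact: component_rooted_dtree hd htree.
split; first by rewrite tensor_locally_finiteE ?cart_locally_finiteE.
split; first exact: tensor_leafless hleaf.
split; first exact: Froot_branching_index hd htree hleaf.
(* every depth is attained in the component of the root, whatever v is *)
by move=> v alpha _; exact: (Froot_depth_exists hd htree hleaf).
Qed.
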